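(* Let $\mathcal A$ be an arrangement of $n$ affine lines in $\mathbb C^2$ whose graph of double points $\Gamma$ is connected, and let $\widetilde{\mathcal A}=c\mathcal A$ be its cone. Then the resonance variety $\mathcal R^1(\widetilde{\mathcal A})$ has no global component.
   Context: The graph of double points $\Gamma$ of $\mathcal A$ has vertex set $\mathcal A$, with an edge $\{\ell_i,\ell_j\}$ iff $\ell_i\cap\ell_j$ is a point lying on no other line of $\mathcal A$. The cone $c\mathcal A=\{\widetilde H_0,\dots,\widetilde H_n\}$ is the central arrangement in $\mathbb C^3$ consisting of $z_0=0$ and the homogenizations of the lines of $\mathcal A$. Let $A^\bullet$ be the Orlik–Solomon algebra of $\widetilde{\mathcal A}$ over $\mathbb C$, with $A^1$ having the standard basis $e_0,\dots,e_n$ corresponding to the hyperplanes. The resonance variety is $\mathcal R^1(\widetilde{\mathcal A})=\{a\in A^1: H^1(A^\bullet,a\wedge\cdot)\ne 0\}$; it is a finite union of linear subspaces (its components). A component is called global if it is not contained in any coordinate hyperplane of $A^1$ (with respect to the basis $e_0,\dots,e_n$). *)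

From HB Require Import structures.
From mathcomp Require Import all_boot all_order all_algebra.
From Stdlib Require Import Relations.
Set Implicit Arguments. Unset Strict Implicit. Unset Printing Implicit Defensive.
Import Order.TTheory GRing.Theory Num.Theory.
Local Open Scope ring_scope.

Definition on_line (C : numClosedFieldType) (n : nat) (a b c : 'I_n -> C)
  (i : 'I_n) (p : C * C) : Prop :=
  a i * p.1 + b i * p.2 + c i = 0.

Definition is_line_arrangement (C : numClosedFieldType) (n : nat)
  (a b c : 'I_n -> C) : Prop :=
  (forall i, (a i, b i) <> (0, 0)) /\
  (forall i j : 'I_n, i <> j -> exists p, ~ (on_line a b c i p <-> on_line a b c j p)).

Definition double_point_edge (C : numClosedFieldType) (n : nat)
  (a b c : 'I_n -> C) (i j : 'I_n) : Prop :=
  i <> j /\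
  exists p, on_line a b c i p /\ on_line a b c j p /\
    (forall q, on_line a b c i q -> on_line a b c j q -> q = p) /\
    (forall k, k <> i -> k <> j -> ~ on_line a b c k p).

Definition graph_connected (n : nat) (E : 'I_n -> 'I_n -> Prop) : Prop :=
  forall i j, clos_refl_trans _ E i j.

(* Cone cA in C^3, hyperplanes indexed by 'I_n.+1: index 0 is z_0 = 0, index
   (lift ord0 i) is a i * z_1 + b i * z_2 + c i * z_0 = 0.  Normal vectors
   (coefficients of z_0, z_1, z_2): *)
Definition cone_normal (C : numClosedFieldType) (n : nat) (a b c : 'I_n -> C)
  (k : 'I_n.+1) : 'rV[C]_3 :=
  match unlift ord0 k with
  | None => \row_(j < 3) (if j == 0 :> nat then 1 else 0)
  | Some i => \row_(j < 3) (if j == 0 :> nat then c i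
                            else if j == 1 :> nat then a i else b i)
  end.

(* A triple of hyperplanes of the (central, rank <= 3) cone is dependent iff
   its normals are linearly dependent. *)
Definition cone_dependent (C : numClosedFieldType) (n : nat) (a b c : 'I_n -> C)
  (p q r : 'I_n.+1) : bool :=
  \det (\matrix_(s < 3, j < 3)
          (if s == 0 :> nat then cone_normal a b c p 0 j
           else if s == 1 :> nat then cone_normal a b c q 0 j
           else cone_normal a b c r 0 j)) == 0.

(* Exterior algebra degree 2 modelled as skew-symmetric (n+1)x(n+1) matrices:
   e_p e_q  <->  E p q := delta_mx p q - delta_mx q p. *)
Definition ewedge2 (C : numClosedFieldType) (m : nat) (p q : 'I_m) : 'M[C]_m :=
  delta_mx p q - delta_mx q p.

(* wedge of two degree-one elements a = sum a_p e_p, b = sum b_q e_q *)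
Definition wedge1 (C : numClosedFieldType) (m : nat) (x y : 'rV[C]_m) : 'M[C]_m :=
  x^T *m y - y^T *m x.

Definition bd3 (C : numClosedFieldType) (m : nat) (p q r : 'I_m) : 'M[C]_m :=
  ewedge2 C q r - ewedge2 C p r + ewedge2 C p q.

(* Degree-2 part I^2 of the Orlik-Solomon ideal of the cone: spanned by the
   boundaries of dependent triples (there are no dependent sets of size <= 2,
   the hyperplanes of the cone being distinct). *)
Definition OS_ideal2 (C : numClosedFieldType) (n : nat) (a b c : 'I_n -> C)
  : {vspace 'M[C]_n.+1} :=
  (\sum_(p < n.+1) \sum_(q < n.+1) \sum_(r < n.+1 | ((p < q)%N && (q < r)%N) && cone_dependent a b c p q r)
      <[ bd3 C p q r ]>)%VS.

(* a in R^1(cA): H^1(A, a /\ .) <> 0, i.e. the kernel of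
   a /\ . : A^1 -> A^2 = E^2 / I^2 strictly contains the image of
   a . : A^0 = C -> A^1 (which is the span of a). *)
Definition resonant (C : numClosedFieldType) (n : nat) (a b c : 'I_n -> C)
  (x : 'rV[C]_n.+1) : Prop :=
  exists y : 'rV[C]_n.+1, wedge1 x y \in OS_ideal2 a b c /\ y \notin <[x]>%VS.

Definition resonance_component (C : numClosedFieldType) (n : nat) (a b c : 'I_n -> C)
  (V : {vspace 'rV[C]_n.+1}) : Prop :=
  (forall x, x \in V -> resonant a b c x) /\
  (forall W : {vspace 'rV[C]_n.+1},
      (V <= W)%VS -> (forall x, x \in W -> resonant a b c x) -> W = V).

Definition global_component (C : numClosedFieldType) (n : nat)
  (V : {vspace 'rV[C]_n.+1}) : Prop :=
  forall k : 'I_n.+1, ~ (forall x, x \in V -> x 0 k = 0).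

From HB Require Import structures.
From mathcomp Require Import all_boot all_order all_algebra ring.
From Stdlib Require Import Classical.
Set Implicit Arguments. Unset Strict Implicit. Unset Printing Implicit Defensive.
Import Order.TTheory GRing.Theory Num.Theory.
Local Open Scope ring_scope.

(* A global component contains a vector x with no zero coordinate.  Suppose
   x /\ y lies in I^2.  No dependent triple of the cone contains the
   hyperplanes of two lines meeting in a double point, so the corresponding
   entry of x /\ y vanishes: x_i y_j = x_j y_i along the edges of Gamma, hence
   for all pairs of affine lines since Gamma is connected and x has no zero
   coordinate.  Every element of I^2 has zero column sums (the boundary of a
   boundary vanishes), which yields the same relation between each line and the
   hyperplane z_0 = 0.  Thus y is proportional to x, and x is not resonant. *)

Lemma exists_notin_seq (R : numDomainType) (s : seq R) : exists t, t \notin s.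
Proof.
suff [t [t_ge0 lt_t]] : exists t : R, 0 <= t /\ forall u, u \in s -> `|u| < t.
  by exists t; apply/negP => /lt_t; rewrite ger0_norm // ltxx.
elim: s => [|h s [t [t_ge0 lt_t]]]; first by exists 0.
exists (t + `|h| + 1); split; first by rewrite !addr_ge0.
have le_t : t <= t + `|h| by rewrite lerDl.
move=> u; rewrite inE => /orP[/eqP->|/lt_t ut].
  by rewrite ltr_pwDr // lerDr.
by rewrite (lt_le_trans ut) // (le_trans le_t) // lerDl.
Qed.

Lemma row_addZ_neq0 (F : numFieldType) (m : nat) (x v : 'rV[F]_m) (t : F) k :
  t \notin [seq - x 0 j / v 0 j | j <- enum 'I_m] ->
  (x 0 k != 0) || (v 0 k != 0) -> (x + t *: v) 0 k != 0.
Proof.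
move=> t_avoid nz; rewrite !mxE; have [vk0|vk_neq0] := eqVneq (v 0 k) 0.
  by rewrite vk0 mulr0 addr0; rewrite vk0 eqxx orbF in nz.
apply: contra t_avoid; rewrite addr_eq0 => /eqP xk; apply/mapP.
by exists k; rewrite ?mem_enum // xk opprK mulfK.
Qed.

Lemma vspace_nowhere_zero (F : numFieldType) (m : nat) (V : {vspace 'rV[F]_m}) :
  (forall k : 'I_m, exists2 v, v \in V & v 0 k != 0) ->
  exists2 x, x \in V & forall k, x 0 k != 0.
Proof.
move=> coordV.
suff /(_ (enum 'I_m)) [x xV nz] : forall s : seq 'I_m,
    exists2 x, x \in V & forall k, k \in s -> x 0 k != 0.
  by exists x => // k; apply: nz; rewrite mem_enum.
elim=> [|k s [x xV nz]]; first by exists 0; rewrite ?mem0v.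
have [v vV vk] := coordV k.
have [t t_avoid] := exists_notin_seq [seq - x 0 j / v 0 j | j <- enum 'I_m].
exists (x + t *: v); first by rewrite memvD ?memvZ.
move=> j; rewrite inE => /orP[/eqP->|js]; apply: row_addZ_neq0 => //.
  by rewrite vk orbT.
by rewrite nz.
Qed.

Lemma sum_natr_eq_andb (R : pzSemiRingType) (T : finType) (s : T) (B : bool) :
  \sum_(u : T) ((u == s) && B)%:R = B%:R :> R.
Proof. by rewrite (bigD1 s) //= eqxx big1 ?addr0 // => u /negbTE->. Qed.

Section OrlikSolomonIdeal.
Variables (C : numClosedFieldType) (n : nat) (a b c : 'I_n -> C).

Lemma OS_ideal2_ind (phi : 'M[C]_n.+1 -> C) :
  (forall k M N, phi (k *: M + N) = k * phi M + phi N) ->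
  (forall p q r : 'I_n.+1, (p < q < r)%N -> cone_dependent a b c p q r ->
     phi (bd3 C p q r) = 0) ->
  forall M, M \in OS_ideal2 a b c -> phi M = 0.
Proof.
move=> phi_lin phi_bd3.
have phi0 : phi 0 = 0.
  have := phi_lin 1 0 0; rewrite scale1r addr0 mul1r -[LHS]addr0.
  by move/addrI.
pose Q (U : {vspace 'M[C]_n.+1}) := forall M, M \in U -> phi M = 0.
have Q0 : Q 0%VS by move=> M; rewrite memv0 => /eqP ->.
have QD U W : Q U -> Q W -> Q (U + W)%VS.
  move=> QU QW _ /memv_addP[u uU [w wW ->]].
  by rewrite -[u]scale1r phi_lin QU ?QW ?mulr0 ?addr0.
apply: (big_ind Q) => // p _; apply: (big_ind Q) => // q _.
apply: (big_ind Q) => // r /andP[pqr dep] _ /vlineP[k ->].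
by rewrite -[_ *: _]addr0 phi_lin phi0 phi_bd3 ?mulr0 ?addr0.
Qed.

Lemma bd3E (p q r u v : 'I_n.+1) :
  bd3 C p q r u v = ewedge2 C q r u v - ewedge2 C p r u v + ewedge2 C p q u v.
Proof. by rewrite /bd3 /ewedge2 !mxE. Qed.

Lemma sum_bd3_col (p q r k : 'I_n.+1) : \sum_u bd3 C p q r u k = 0.
Proof.
rewrite /bd3; under eq_bigr => u _ do rewrite !mxE.
by rewrite !(big_split, sumrN) /= !sum_natr_eq_andb; ring.
Qed.

Lemma OS_ideal2_sum_col M k : M \in OS_ideal2 a b c -> \sum_u M u k = 0.
Proof.
apply: (OS_ideal2_ind (phi := fun N => \sum_u N u k)) => [k' M1 M2|p q r _ _].
  by rewrite mulr_sumr -big_split; apply: eq_bigr => u _; rewrite !mxE.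
exact: sum_bd3_col.
Qed.

End OrlikSolomonIdeal.

Section Wedge.
Variables (C : numClosedFieldType) (m : nat) (x y : 'rV[C]_m).

Lemma wedge1E u v : wedge1 x y u v = x 0 u * y 0 v - y 0 u * x 0 v.
Proof. by rewrite !mxE !big_ord1 !mxE. Qed.

Lemma wedge1_diag u : wedge1 x y u u = 0.
Proof. by rewrite wedge1E mulrC subrr. Qed.

Lemma wedge1_trans u v w : x 0 v != 0 ->
  wedge1 x y u v = 0 -> wedge1 x y v w = 0 -> wedge1 x y u w = 0.
Proof.
rewrite !wedge1E => xv /eqP; rewrite subr_eq0 => /eqP uv /eqP; rewrite subr_eq0 => /eqP vw.
apply: (mulIf xv); rewrite mul0r.
transitivity (x 0 u * (x 0 v * y 0 w) - (y 0 u * x 0 v) * x 0 w); first by ring.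
by rewrite vw -uv; ring.
Qed.

Lemma wedge1_eq0_memv_line k0 : x 0 k0 != 0 ->
  (forall k, wedge1 x y k0 k = 0) -> y \in <[x]>%VS.
Proof.
move=> xk0 wedge0; apply/vlineP; exists (y 0 k0 / x 0 k0).
apply/rowP => k; move/eqP: (wedge0 k); rewrite wedge1E subr_eq0 => /eqP xy.
by rewrite !mxE mulrAC -xy mulrC mulKf.
Qed.

End Wedge.

Lemma det_mx3 (R : comNzRingType) (F : nat -> nat -> R) :
  \det (\matrix_(i < 3, j < 3) F i j) =
    F 0%N 0%N * (F 1%N 1%N * F 2%N 2%N - F 1%N 2%N * F 2%N 1%N)
  - F 0%N 1%N * (F 1%N 0%N * F 2%N 2%N - F 1%N 2%N * F 2%N 0%N)
  + F 0%N 2%N * (F 1%N 0%N * F 2%N 1%N - F 1%N 1%N * F 2%N 0%N).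
Proof.
rewrite !(expand_det_row _ 0) !big_ord_recr big_ord0 /cofactor /=.
rewrite !(expand_det_row _ 0) !big_ord_recr big_ord0 /cofactor /= !det_mx11 !mxE /=.
by rewrite !big_ord0 /bump /= !expr0 !expr1 !addn0 !add0n /=; ring.
Qed.

Section ConeDeterminant.
Variables (C : numClosedFieldType) (n : nat) (a b c : 'I_n -> C).

Definition cone_coef (k : 'I_n.+1) (j : nat) : C := cone_normal a b c k 0 (inord j).

Definition triple_det (u v w : nat -> C) : C :=
    u 0%N * (v 1%N * w 2%N - v 2%N * w 1%N)
  - u 1%N * (v 0%N * w 2%N - v 2%N * w 0%N)
  + u 2%N * (v 0%N * w 1%N - v 1%N * w 0%N).

Lemma triple_detC12 u v w : triple_det v u w = - triple_det u v w.
Proof. by rewrite /triple_det; ring. Qed.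

Lemma triple_detC23 u v w : triple_det u w v = - triple_det u v w.
Proof. by rewrite /triple_det; ring. Qed.

Lemma cone_coef_lift i :
  [/\ cone_coef (lift ord0 i) 0 = c i, cone_coef (lift ord0 i) 1 = a i
    & cone_coef (lift ord0 i) 2 = b i].
Proof. by rewrite /cone_coef /cone_normal liftK !mxE !inordK. Qed.

Lemma cone_coef0 :
  [/\ cone_coef ord0 0 = 1, cone_coef ord0 1 = 0 & cone_coef ord0 2 = 0].
Proof. by rewrite /cone_coef /cone_normal unlift_none !mxE !inordK. Qed.

Lemma cone_dependentE p q r : cone_dependent a b c p q r =
  (triple_det (cone_coef p) (cone_coef q) (cone_coef r) == 0).
Proof.
pose F (s j : nat) := if s == 0%N then cone_coef p j
  else if s == 1%N then cone_coef q j else cone_coef r j.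
rewrite /cone_dependent -[triple_det _ _ _](det_mx3 F); congr (\det _ == 0).
by apply/matrixP => s j; rewrite !mxE /F /cone_coef inord_val.
Qed.

End ConeDeterminant.

Section DoublePoint.
Variables (C : numClosedFieldType) (n : nat) (a b c : 'I_n -> C) (i j : 'I_n).
Hypotheses (arr : is_line_arrangement a b c) (ij_edge : double_point_edge a b c i j).

Let cc := cone_coef a b c.

Lemma double_point_minor : a i * b j - a j * b i != 0.
Proof.
have [nz _] := arr; have [_ [p [p_i [p_j [p_uniq _]]]]] := ij_edge.
apply/eqP => minor0.
(* Otherwise (b i, - a i) directs both lines, so p is not their only common point. *)
have := p_uniq (p.1 + b i, p.2 - a i).
move: p_i p_j; rewrite /on_line /= => p_i p_j.
have ei : a i * (p.1 + b i) + b i * (p.2 - a i) + c i = 0 by rewrite -p_i; ring.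
have ej : a j * (p.1 + b i) + b j * (p.2 - a i) + c j = 0.
  by rewrite -[RHS]p_j -[RHS]subr0 -minor0; ring.
case: p {p_i p_j p_uniq} ei ej => p1 p2 ei ej /(_ ei ej) [/eqP + /eqP].
rewrite -[_ == p1]subr_eq0 -[_ == p2]subr_eq0 [p1 + _ - _]addrAC [p2 - _ - _]addrAC.
rewrite !subrr !add0r oppr_eq0 => /eqP bi0 /eqP ai0.
by apply: (nz i); rewrite ai0 bi0.
Qed.

Lemma double_point_triple_det z : z != lift ord0 i -> z != lift ord0 j ->
  triple_det (cc (lift ord0 i)) (cc (lift ord0 j)) (cc z) != 0.
Proof.
have [ci ai bi] := cone_coef_lift a b c i; have [cj aj bj] := cone_coef_lift a b c j.
rewrite /cc /triple_det ci ai bi cj aj bj.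
case: (unliftP ord0 z) => [k ->|->] zi zj; last first.
  have [c0 a0 b0] := cone_coef0 a b c; rewrite c0 a0 b0.
  by rewrite (_ : _ - _ + _ = a i * b j - a j * b i) ?double_point_minor //; ring.
have [ck ak bk] := cone_coef_lift a b c k; rewrite ck ak bk.
have [_ [p [p_i [p_j [_ p_notk]]]]] := ij_edge.
have /p_notk pk : k <> i by apply/eqP; apply: contraNneq zi => ->.
have {}pk : a k * p.1 + b k * p.2 + c k != 0.
  by apply/eqP; apply: pk; apply/eqP; apply: contraNneq zj => ->.
(* Expand against (1, p.1, p.2), which lies on the first two hyperplanes only. *)
rewrite (_ : _ - _ + _ = (a i * p.1 + b i * p.2 + c i) * (a j * b k - b j * a k)
   - (a j * p.1 + b j * p.2 + c j) * (a i * b k - b i * a k)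
   + (a k * p.1 + b k * p.2 + c k) * (a i * b j - a j * b i)); last by ring.
move: p_i p_j; rewrite /on_line => -> ->.
by rewrite !mul0r subrr add0r mulf_neq0 ?double_point_minor.
Qed.

Lemma ewedge2_double_point s t z : z != s -> z != t ->
  triple_det (cc s) (cc t) (cc z) = 0 -> ewedge2 C s t (lift ord0 i) (lift ord0 j) = 0.
Proof.
move=> zs zt dep; rewrite !mxE.
have [/andP[/eqP si /eqP tj]|_] := boolP ((lift ord0 i == s) && (lift ord0 j == t)).
  by subst s t; move: (double_point_triple_det zs zt); rewrite dep eqxx.
have [/andP[/eqP ti /eqP sj]|_] := boolP ((lift ord0 i == t) && (lift ord0 j == s)).
  subst s t; move: (double_point_triple_det zt zs).
  by rewrite -oppr_eq0 -triple_detC12 dep eqxx.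
by rewrite subrr.
Qed.

Lemma bd3_double_point (p q r : 'I_n.+1) :
  (p < q < r)%N -> cone_dependent a b c p q r ->
  bd3 C p q r (lift ord0 i) (lift ord0 j) = 0.
Proof.
case/andP=> pq qr; rewrite cone_dependentE => /eqP dep.
have neq_lt (u v : 'I_n.+1) : (u < v)%N -> v != u.
  by move=> uv; rewrite -val_eqE neq_ltn uv orbT.
have qp := neq_lt _ _ pq; have rq := neq_lt _ _ qr.
have rp := neq_lt _ _ (ltn_trans pq qr).
rewrite bd3E (@ewedge2_double_point q r p) ?(@ewedge2_double_point p r q)
  ?(@ewedge2_double_point p q r) ?subrr ?add0r // 1?eq_sym //.
- by rewrite /cc triple_detC23 dep oppr0.
- by rewrite /cc triple_detC23 triple_detC12 opprK.
Qed.

Lemma OS_ideal2_double_point M :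
  M \in OS_ideal2 a b c -> M (lift ord0 i) (lift ord0 j) = 0.
Proof.
apply: (OS_ideal2_ind (phi := fun N => N (lift ord0 i) (lift ord0 j))) => [k M1 M2|].
  by rewrite !mxE.
exact: bd3_double_point.
Qed.

End DoublePoint.

Theorem corollary3p2 (C : numClosedFieldType) (n : nat) (a b c : 'I_n -> C) :
  is_line_arrangement a b c ->
  graph_connected (double_point_edge a b c) ->
  forall V : {vspace 'rV[C]_n.+1},
    resonance_component a b c V -> ~ global_component V.
Proof.
move=> arr conn V [V_res _] V_global.
have coordV k : exists2 v, v \in V & v 0 k != 0.
  apply: NNPP => none; apply: (V_global k) => v vV.
  by apply/eqP; apply: contra_notT none => vk; exists v.
have [x xV x_nz] := vspace_nowhere_zero coordV.
have [y [xy_OS /negP]] := V_res x xV; apply.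
have lines (i j : 'I_n) : wedge1 x y (lift ord0 i) (lift ord0 j) = 0.
  elim: (conn i j) => [i' j' ij | i' | i' j' k' _ IH1 _ IH2].
  - exact: OS_ideal2_double_point arr ij _ xy_OS.
  - exact: wedge1_diag.
  - exact: wedge1_trans (x_nz _) IH1 IH2.
apply: (wedge1_eq0_memv_line (x_nz ord0)) => k.
case: (unliftP ord0 k) => [l ->|->]; last exact: wedge1_diag.
have := OS_ideal2_sum_col (lift ord0 l) xy_OS.
by rewrite big_ord_recl big1 ?addr0 // => i _; apply: lines.
Qed.
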